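(* Let $n\ge 5$ and let $C_n$ be the cycle with $n$ vertices. Then $C_n$ is not a $3$-threshold graph: there are no real numbers $\theta_1<\theta_2<\theta_3$ and map $r:V(C_n)\to\mathbb{R}$ such that for all distinct vertices $u,v$, $uv$ is an edge if and only if $r(u)+r(v)\in[\theta_1,\theta_2)\cup[\theta_3,\infty)$.
   Context: All graphs are finite and simple. $C_n$ denotes the cycle with $n$ vertices. *)

From mathcomp Require Import all_boot.
From Stdlib Require Import Reals.
Set Implicit Arguments. Unset Strict Implicit. Unset Printing Implicit Defensive.

Definition cycle_adj (n : nat) (i j : 'I_n) : bool :=
  (val j == (val i).+1 %% n) || (val i == (val j).+1 %% n).

Definition is_3_threshold (V : finType) (adj : V -> V -> bool) : Prop :=
  exists (th1 th2 th3 : R) (r : V -> R),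
    (th1 < th2 < th3)%R /\
    forall u v : V, u <> v ->
      (adj u v <-> ((th1 <= r u + r v < th2)%R \/ (th3 <= r u + r v)%R)).

(* Only three properties of C_n (n >= 5) matter: every vertex has exactly two
   neighbours, and there is neither a triangle nor a 4-cycle.  Let a be a vertex
   of maximal rank, with neighbours p and q.  If both sums r a + r p, r a + r q
   stay below th3 they lie in [th1, th2), and the second neighbour of the
   lighter of p, q is then adjacent to the heavier one: a 4-cycle through a.
   If only r a + r p reaches th3, the second neighbour d of q is not adjacent
   to a, so r d < r p, which forces the edge qp: a triangle.  If both reach th3
   and r q <= r p, the second neighbour b of p has r p + r b in [th1, th2), hence
   r q + r b < th1 (else a-p-b-q is a 4-cycle); a vertex z of minimal rank has a
   neighbour d outside {a, p}, so r d <= r q, and r z + r d <= r b + r q < th1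
   contradicts the edge zd. *)

From mathcomp Require Import all_boot all_order zify.
From Stdlib Require Import Reals Lra.
From mathcomp Require Import Rstruct.

Set Implicit Arguments.
Unset Strict Implicit.
Unset Printing Implicit Defensive.

Lemma exists_argmaxR (T : finType) (x0 : T) (f : T -> R) :
  exists a, forall x, (f x <= f a)%R.
Proof.
case: (@Order.TotalTheory.arg_maxP _ _ _ x0 xpredT f isT) => a _ a_max.
by exists a => x; apply/RleP/a_max.
Qed.

Lemma exists_argminR (T : finType) (x0 : T) (f : T -> R) :
  exists z, forall x, (f z <= f x)%R.
Proof.
case: (@Order.TotalTheory.arg_minP _ _ _ x0 xpredT f isT) => z _ z_min.
by exists z => x; apply/RleP/z_min.
Qed.

Section TwoRegularGirthFive.

Variables (V : finType) (adj : rel V).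
Hypothesis adj_sym : symmetric adj.
Hypothesis no_triangle : forall x y z, adj x y -> adj y z -> adj z x -> False.
Hypothesis no_square : forall x y z w,
  x != z -> y != w -> adj x y -> adj y z -> adj z w -> adj w x -> False.
Hypothesis nbhd_pair : forall x,
  exists p q, p != q /\ forall y, adj x y = (y == p) || (y == q).

Lemma adj_irrefl x : ~~ adj x x.
Proof. by apply/negP => xx; apply: (no_triangle xx xx xx). Qed.

Lemma adj_neq x y : adj x y -> x != y.
Proof. by apply: contraTneq => ->; apply: adj_irrefl. Qed.

Lemma adj_other x y : adj x y -> exists2 z, adj x z & z != y.
Proof.
have [p [q [pq E]]] := nbhd_pair x.
by rewrite E => /orP[] /eqP ->; [exists q | exists p];
  rewrite ?E ?eqxx ?orbT // eq_sym.
Qed.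

Lemma third_nbr_eq x y z w :
  adj x y -> adj x z -> y != z -> adj x w -> (w == y) || (w == z).
Proof.
have [p [q [pq E]]] := nbhd_pair x; rewrite !E.
case/orP=> /eqP-> ; case/orP=> /eqP-> ; rewrite ?eqxx // => _;
  by case/orP=> /eqP->; rewrite eqxx ?orbT.
Qed.

Lemma nbr_avoid_edge x y z : adj y z -> exists2 w, adj x w & w \notin [:: y; z].
Proof.
move=> yz; have [p [q [pq E]]] := nbhd_pair x.
have [p_yz|] := boolP (p \in [:: y; z]); last by exists p; rewrite // E eqxx.
have [q_yz|] := boolP (q \in [:: y; z]); last by exists q; rewrite // E eqxx orbT.
have [xy xz] : adj x y /\ adj x z.
  by move: p_yz q_yz pq; rewrite !inE !E => /orP[]/eqP-> /orP[]/eqP->;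
    rewrite ?eqxx ?orbT.
by case: (no_triangle xy yz); rewrite adj_sym.
Qed.

Local Open Scope R_scope.

Section Threshold.

Variables (th1 th2 th3 : R) (r : V -> R).
Hypotheses (th12 : th1 < th2) (th23 : th2 < th3).
Hypothesis threshold : forall u v, u <> v ->
  (adj u v <-> (th1 <= r u + r v < th2) \/ th3 <= r u + r v).

Lemma adj_sum u v : adj u v -> (th1 <= r u + r v < th2) \/ th3 <= r u + r v.
Proof. by move=> uv; apply/(threshold (elimN eqP (adj_neq uv))). Qed.

Lemma adj_sum_ge u v : adj u v -> th1 <= r u + r v.
Proof. by move/adj_sum; lra. Qed.

Lemma adj_sum_mid u v : adj u v -> r u + r v < th3 -> th1 <= r u + r v < th2.
Proof. by move/adj_sum; lra. Qed.

Lemma sum_mid_adj u v : u != v -> th1 <= r u + r v < th2 -> adj u v.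
Proof. by move=> /eqP uv s_mid; apply/(threshold uv); left. Qed.

Lemma sum_high_adj u v : u != v -> th3 <= r u + r v -> adj u v.
Proof. by move=> /eqP uv s_high; apply/(threshold uv); right. Qed.

Section MaximalVertex.

Variable a : V.
Hypothesis a_max : forall x, r x <= r a.

Lemma max_sum_lt_non_nbr p q x : adj a p -> adj a q -> p != q ->
  x \notin [:: a; p; q] -> r a + r x < th3.
Proof.
rewrite !inE => ap aq pq; rewrite !negb_or => /and3P[xa xp xq].
have [//|high] := Rlt_le_dec (r a + r x) th3.
have ax : adj a x by apply: sum_high_adj; rewrite // eq_sym.
by move: (third_nbr_eq ap aq pq ax); rewrite (negbTE xp) (negbTE xq).
Qed.

Lemma max_nbr_sums_not_both_low p q : adj a p -> adj a q -> p != q ->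
  r p <= r q -> r a + r p < th3 -> r a + r q < th3 -> False.
Proof.
move=> ap aq pq pq_le ap_low aq_low.
have [w pw wa] : exists2 w, adj p w & w != a by apply: adj_other; rewrite adj_sym.
have aq_mid := adj_sum_mid aq aq_low.
have wq : w != q.
  apply: contraTneq pw => ->; apply/negP => pq'.
  by apply: no_triangle ap pq' _; rewrite adj_sym.
have qw : adj q w.
  apply: sum_mid_adj; first by rewrite eq_sym.
  by have := adj_sum_ge pw; have := a_max w; lra.
by apply: (no_square _ pq ap pw _ (_ : adj q a)); rewrite 1?eq_sym // adj_sym.
Qed.

Lemma max_nbr_sums_not_mixed p q : adj a p -> adj a q -> p != q ->
  th3 <= r a + r p -> r a + r q < th3 -> False.
Proof.
move=> ap aq pq ap_high aq_low.
have [d qd da] : exists2 d, adj q d & d != a by apply: adj_other; rewrite adj_sym.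
have qp : adj q p.
  have [<- //|dp] := eqVneq d p.
  have ad_low : r a + r d < th3.
    apply: (max_sum_lt_non_nbr ap aq pq).
    by rewrite !inE !negb_or da dp eq_sym adj_neq.
  apply: sum_mid_adj; first by rewrite eq_sym.
  by have := adj_sum_ge qd; have := adj_sum_mid aq aq_low; have := a_max p; lra.
by apply: no_triangle ap (_ : adj p q) (_ : adj q a); rewrite adj_sym.
Qed.

Lemma max_nbr_sums_not_both_high p q : adj a p -> adj a q -> p != q ->
  r q <= r p -> th3 <= r a + r p -> th3 <= r a + r q -> False.
Proof.
move=> ap aq pq qp_le ap_high aq_high.
have [b pb ba] : exists2 b, adj p b & b != a by apply: adj_other; rewrite adj_sym.
have bq : b != q.
  apply: contraTneq pb => ->; apply/negP => pq'.
  by apply: no_triangle ap pq' _; rewrite adj_sym.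
have ab_low : r a + r b < th3.
  apply: (max_sum_lt_non_nbr ap aq pq).
  by rewrite !inE !negb_or ba bq eq_sym adj_neq.
have pb_mid : th1 <= r p + r b < th2.
  by apply: adj_sum_mid pb _; have := a_max p; lra.
have qb_low : r q + r b < th1.
  have [//|qb_ge] := Rlt_le_dec (r q + r b) th1.
  have qb : adj q b by apply: sum_mid_adj; [rewrite eq_sym | lra].
  by case: (no_square _ pq ap pb (_ : adj b q) (_ : adj q a));
    rewrite 1?eq_sym // adj_sym.
have [z z_min] := exists_argminR a r.
have [d zd dap] := nbr_avoid_edge z ap.
have dq_le : r d <= r q.
  have [-> |dq] := eqVneq d q; first lra.
  have : r a + r d < th3.
    apply: (max_sum_lt_non_nbr ap aq pq).
    by move: dap; rewrite !inE !negb_or dq andbT.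
  lra.
by have := adj_sum_ge zd; have := z_min b; lra.
Qed.

End MaximalVertex.

Lemma no_3_threshold_rank (x0 : V) : False.
Proof.
have [a a_max] := exists_argmaxR x0 r.
have [p [q [pq E]]] := nbhd_pair a.
have ap : adj a p by rewrite E eqxx.
have aq : adj a q by rewrite E eqxx orbT.
have qp : q != p by rewrite eq_sym.
have [ap_low|ap_high] := Rlt_le_dec (r a + r p) th3;
  have [aq_low|aq_high] := Rlt_le_dec (r a + r q) th3.
- have [pq_le|qp_lt] := Rle_lt_dec (r p) (r q).
  + exact: (max_nbr_sums_not_both_low a_max ap aq pq pq_le ap_low aq_low).
  + exact: (max_nbr_sums_not_both_low a_max aq ap qp (Rlt_le _ _ qp_lt)
             aq_low ap_low).
- exact: (max_nbr_sums_not_mixed a_max aq ap qp aq_high ap_low).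
- exact: (max_nbr_sums_not_mixed a_max ap aq pq ap_high aq_low).
- have [qp_le|pq_lt] := Rle_lt_dec (r q) (r p).
  + exact: (max_nbr_sums_not_both_high a_max ap aq pq qp_le ap_high aq_high).
  + exact: (max_nbr_sums_not_both_high a_max aq ap qp (Rlt_le _ _ pq_lt)
             aq_high ap_high).
Qed.

End Threshold.

Lemma two_regular_girth5_not_3_threshold (x0 : V) : ~ is_3_threshold adj.
Proof.
case=> th1 [th2 [th3 [r [[th12 th23] threshold]]]].
exact: no_3_threshold_rank threshold x0.
Qed.

End TwoRegularGirthFive.

Lemma succ_modn_cases n i : i < n ->
  i.+1 < n /\ i.+1 %% n = i.+1 \/ i.+1 = n /\ i.+1 %% n = 0.
Proof.
move=> lt_in; case: (ltnP i.+1 n) => [lt_Sin|le_nSi].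
  by left; rewrite modn_small.
have eq_Sin : i.+1 = n by lia.
by right; rewrite eq_Sin modnn.
Qed.

Lemma cycle_adjP n (i j : 'I_n) :
  reflect (j = i.+1 :> nat \/ i = j.+1 :> nat \/
           i.+1 = n /\ j = 0 :> nat \/ j.+1 = n /\ i = 0 :> nat)
          (cycle_adj i j).
Proof.
rewrite /cycle_adj /=.
have := succ_modn_cases (ltn_ord i); have := succ_modn_cases (ltn_ord j).
have := ltn_ord i; have := ltn_ord j.
(* lia cannot handle [%%] by a variable modulus, so the remainders are
   abstracted away once their values are known. *)
move: (i.+1 %% n) (j.+1 %% n) => si sj *.
apply: (iffP orP); lia.
Qed.

Lemma cycle_adj_sym n : symmetric (@cycle_adj n).
Proof. by move=> i j; rewrite /cycle_adj orbC. Qed.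

Lemma cycle_no_triangle n : 3 < n -> forall i j k : 'I_n,
  cycle_adj i j -> cycle_adj j k -> cycle_adj k i -> False.
Proof.
move=> n_gt3 i j k /cycle_adjP ij /cycle_adjP jk /cycle_adjP ki.
by have := ltn_ord i; have := ltn_ord j; have := ltn_ord k; lia.
Qed.

Lemma cycle_no_square n : 4 < n -> forall i j k l : 'I_n, i != k -> j != l ->
  cycle_adj i j -> cycle_adj j k -> cycle_adj k l -> cycle_adj l i -> False.
Proof.
move=> n_gt4 i j k l; rewrite -!val_eqE /=.
move=> ik jl /cycle_adjP ij /cycle_adjP jk /cycle_adjP kl /cycle_adjP li.
have := ltn_ord i; have := ltn_ord j; have := ltn_ord k; have := ltn_ord l.
lia.
Qed.

Lemma cycle_nbhd_pair n : 2 < n -> forall i : 'I_n,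
  exists p q : 'I_n, p != q /\ forall j, cycle_adj i j = (j == p) || (j == q).
Proof.
move=> n_gt2 i; have lt_in := ltn_ord i.
have [p p_val] : exists p : 'I_n, val p = if i.+1 < n then i.+1 else 0.
  have p_lt : (if i.+1 < n then i.+1 else 0) < n by case: ifP; lia.
  by exists (Ordinal p_lt).
have [q q_val] : exists q : 'I_n, val q = if 0 < i then i.-1 else n.-1.
  have q_lt : (if 0 < i then i.-1 else n.-1) < n by case: ifP; lia.
  by exists (Ordinal q_lt).
exists p, q; split.
  by rewrite -val_eqE p_val q_val; case: ifP; case: ifP; lia.
move=> j; have := ltn_ord j; rewrite -!val_eqE /= p_val q_val.
by case: ifP; case: ifP => *; apply/cycle_adjP/orP; lia.
Qed.

Theorem mainTheorem5 (n : nat) (hn : 5 <= n) :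
  ~ is_3_threshold (@cycle_adj n).
Proof.
have n_gt0 : 0 < n by lia.
exact: (two_regular_girth5_not_3_threshold (@cycle_adj_sym n)
  (cycle_no_triangle (ltnW hn)) (cycle_no_square hn)
  (cycle_nbhd_pair (ltnW (ltnW hn))) (Ordinal n_gt0)).
Qed.
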